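(* Let $k\ge 1$, let $z_1,\dots,z_k\in\mathbb{C}$ be pairwise distinct with $|z_j|\le 1$ and $z_j\neq 1$ for $j=1,\dots,k$, and let $n,n_1,\dots,n_k\ge 1$ be integers with $n\ge 2$ and $\sum_{j=1}^k n_j\ge kn$. Let $$p(z)=(z-1)^n\prod_{j=1}^{k}(z-z_j)^{n_j},\quad z\in\mathbb{C}.$$ Then there exists $\zeta\neq 1$ such that $p'(\zeta)=0$ and $|\zeta-1/2|\le 1/2$. *)

From HB Require Import structures.
From mathcomp Require Import all_boot all_order all_algebra.
From mathcomp Require Import reals.
From mathcomp.real_closed Require Export complex.
Set Implicit Arguments. Unset Strict Implicit. Unset Printing Implicit Defensive.
Import Order.TTheory GRing.Theory Num.Theory.
Local Open Scope ring_scope.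
Local Open Scope complex_scope.

Definition pcor (R : rcfType) (k n : nat) (z : 'I_k -> R[i]) (nn : 'I_k -> nat)
  : {poly R[i]} :=
  ('X - 1) ^+ n * \prod_(j < k) ('X - (z j)%:P) ^+ (nn j).

From HB Require Import structures.
From mathcomp Require Import all_boot all_order all_algebra.
From mathcomp Require Import reals.
From mathcomp.real_closed Require Import complex.
From mathcomp Require Import ring lra.
Set Implicit Arguments.
Unset Strict Implicit.
Unset Printing Implicit Defensive.

Import Order.TTheory GRing.Theory Num.Theory.
Local Open Scope ring_scope.

(* Write p = (X - 1)^n Q with Q = prod_j (X - z_j)^(n_j).  Then
   p' = (X - 1)^(n-1) M with M = n Q + (X - 1) Q', and M = r A where
   A = prod_j (X - z_j)^(n_j - 1) and deg r <= k.  As r(1) <> 0, comparing the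
   logarithmic derivatives at 1 of both sides of M = r A gives, over the roots
   e of r,
     n sum_e 1/(1 - e) = n sum_j 1/(1 - z_j) + sum_j n_j/(1 - z_j).
   The map w |-> 1/(1 - w) sends the closed unit disk minus 1 into the
   half-plane Re >= 1/2, and the preimage of Re >= 1 is the disk
   |e - 1/2| <= 1/2.  So the real part of the right-hand side is at least
   n k/2 + (sum_j n_j)/2 >= n k, and since r has at most k roots, one of them
   lies in that disk. *)

Lemma poly_neq0_horner (R : nzRingType) (p : {poly R}) (x : R) :
  p.[x] != 0 -> p != 0.
Proof. by apply: contraNneq => ->; rewrite horner0. Qed.

Section LogarithmicDerivative.
Variables (F : fieldType) (c : F).

Definition logder (p : {poly F}) : F := p^`().[c] / p.[c].

Lemma logderM p q : p.[c] != 0 -> q.[c] != 0 ->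
  logder (p * q) = logder p + logder q.
Proof.
by move=> p_c q_c; rewrite /logder derivM hornerD !hornerM; field; apply/andP.
Qed.

Lemma logderZ a p : a != 0 -> logder (a *: p) = logder p.
Proof.
by move=> a0; rewrite /logder derivZ !hornerZ invfM mulrACA mulfV // mul1r.
Qed.

Lemma logder_prod (I : eqType) (s : seq I) (P : I -> {poly F}) :
  (forall i, i \in s -> (P i).[c] != 0) ->
  logder (\prod_(i <- s) P i) = \sum_(i <- s) logder (P i).
Proof.
elim: s => [|i s IHs] P_c.
  by rewrite !big_nil /logder derivC horner0 mul0r.
have P_c' j : j \in s -> (P j).[c] != 0.
  by move=> js; rewrite P_c // inE js orbT.
rewrite !big_cons logderM ?P_c ?mem_head ?IHs //.
by rewrite horner_prod prodf_seq_neq0; apply/allP.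
Qed.

Lemma logder_XsubC_exp a m :
  c != a -> logder (('X - a%:P) ^+ m) = m%:R / (c - a).
Proof.
move=> ca; have ca0 : c - a != 0 by rewrite subr_eq0.
rewrite /logder deriv_exp derivXsubC mul1r hornerMn !horner_exp hornerXsubC.
case: m => [|m]; first by rewrite !mulr0n !mul0r.
by rewrite exprS /= -mulr_natr; field; rewrite ca0 expf_neq0.
Qed.

End LogarithmicDerivative.

Lemma logder_sum_roots (F : closedFieldType) (c : F) (p : {poly F}) :
  p.[c] != 0 ->
  exists rs : seq F, [/\ size rs = (size p).-1, all (root p) rs &
                         logder c p = \sum_(e <- rs) (c - e)^-1].
Proof.
move=> p_c; have p0 := poly_neq0_horner p_c.
have [rs p_eq] := closed_field_poly_normal p.
have lc0 : lead_coef p != 0 by rewrite lead_coef_eq0.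
have root_rs e : e \in rs -> root p e.
  by move=> ers; rewrite p_eq rootZ // root_prod_XsubC.
have c_rs e : e \in rs -> c != e.
  by move=> /root_rs/eqP pe; apply: contraNneq p_c => ->; rewrite pe.
exists rs; split.
- by rewrite p_eq size_scale // size_prod_XsubC.
- exact/allP.
- rewrite p_eq logderZ // logder_prod => [|e /c_rs]; last first.
    by rewrite hornerXsubC subr_eq0.
  apply: eq_big_seq => e /c_rs ce.
  by rewrite -(expr1 ('X - _)) logder_XsubC_exp // mulr1n div1r.
Qed.

Lemma dvdp_deriv_prod_exp (F : fieldType) (I : Type) (s : seq I)
    (P : I -> {poly F}) (m : I -> nat) :
  \prod_(i <- s) P i ^+ (m i).-1 %| (\prod_(i <- s) P i ^+ m i)^`().
Proof.
elim: s => [|i s IHs]; first by rewrite !big_nil dvd1p.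
have dvd_prod : \prod_(j <- s) P j ^+ (m j).-1 %| \prod_(j <- s) P j ^+ m j.
  apply: (big_ind2 (fun a b => a %| b)) => [|a b a' b'|j _].
  - exact: dvdpp.
  - exact: dvdp_mul.
  - exact: dvdp_exp2l (leq_pred _).
rewrite !big_cons derivM deriv_exp dvdp_add // dvdp_mul //.
- by rewrite -mulr_natr dvdp_mulr // dvdp_mull.
- exact: dvdp_exp2l (leq_pred _).
Qed.

Section CriticalPoints.
Variables (F : closedFieldType) (c : F) (k n : nat).
Variables (z : 'I_k -> F) (m : 'I_k -> nat).
Hypotheses (n_neq0 : n%:R != 0 :> F) (m_gt0 : forall j, (0 < m j)%N)
  (z_neq_c : forall j, z j != c).

Let Q := \prod_(j < k) ('X - (z j)%:P) ^+ m j.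
Let A := \prod_(j < k) ('X - (z j)%:P) ^+ (m j).-1.
Let M := n%:R *: Q + ('X - c%:P) * Q^`().
Let r := M %/ A.

Lemma deriv_pcorE : (('X - c%:P) ^+ n * Q)^`() = ('X - c%:P) ^+ n.-1 * M.
Proof.
have n_gt0 : (0 < n)%N by rewrite lt0n; apply: contraNneq n_neq0 => ->.
have Xc_exp : ('X - c%:P) ^+ n = ('X - c%:P) ^+ n.-1 * ('X - c%:P).
  by rewrite -exprSr prednK.
rewrite derivM deriv_exp derivXsubC mul1r Xc_exp /M scaler_nat; ring.
Qed.

Lemma Q_factor : Q = A * \prod_(j < k) ('X - (z j)%:P).
Proof.
rewrite -big_split; apply: eq_bigr => j _.
by rewrite -{1}(prednK (m_gt0 j)) exprSr.
Qed.

Lemma M_factor : M = r * A.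
Proof.
rewrite divpK // dvdp_add ?dvdp_mull ?dvdp_deriv_prod_exp //.
by rewrite dvdpZr // Q_factor dvdp_mulIl.
Qed.

Lemma horner_XsubC_exp_neq0 j e : (('X - (z j)%:P) ^+ e).[c] != 0.
Proof. by rewrite horner_exp hornerXsubC expf_neq0 // subr_eq0 eq_sym. Qed.

Lemma horner_prod_XsubC_exp_neq0 (e : 'I_k -> nat) :
  (\prod_(j < k) ('X - (z j)%:P) ^+ e j).[c] != 0.
Proof.
by rewrite horner_prod; apply/prodf_neq0 => j _; apply: horner_XsubC_exp_neq0.
Qed.

Lemma logder_prod_XsubC_exp (e : 'I_k -> nat) :
  logder c (\prod_(j < k) ('X - (z j)%:P) ^+ e j) =
  \sum_(j < k) (e j)%:R / (c - z j).
Proof.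
rewrite logder_prod => [|j _]; last exact: horner_XsubC_exp_neq0.
by apply: eq_bigr => j _; rewrite logder_XsubC_exp // eq_sym.
Qed.

Lemma horner_r_neq0 : r.[c] != 0.
Proof.
have : M.[c] != 0.
  rewrite /M hornerD hornerZ hornerM hornerXsubC subrr mul0r addr0.
  by rewrite mulf_neq0 ?(horner_prod_XsubC_exp_neq0 m).
by rewrite M_factor hornerM; apply: contraNneq => ->; rewrite mul0r.
Qed.

Lemma size_r : (size r <= k.+1)%N.
Proof.
have r0 := poly_neq0_horner horner_r_neq0.
have A0 := poly_neq0_horner (horner_prod_XsubC_exp_neq0 (fun j => (m j).-1)).
have size_M : (size M <= size Q)%N.
  apply: leq_trans (size_polyD _ _) _; rewrite geq_max size_scale_leq /=.
  apply: leq_trans (size_polyMleq _ _) _; rewrite size_XsubC /=.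
  exact/lt_size_deriv/poly_neq0_horner/(horner_prod_XsubC_exp_neq0 m).
have size_G : size (\prod_(j < k) ('X - (z j)%:P)) = k.+1.
  by rewrite -(big_map z xpredT (fun a => 'X - a%:P)) size_prod_XsubC size_map
    /index_enum -enumT size_enum_ord.
have G0 := monic_neq0 (monic_prod_XsubC (index_enum 'I_k) xpredT z).
move: size_M.
rewrite Q_factor M_factor (size_mul r0 A0) (size_mul A0 G0) size_G.
move: A0; rewrite -size_poly_gt0; case: (size A) => // a _.
by rewrite addnS addSn /= addnC leq_add2l.
Qed.

Lemma logder_M : n%:R * logder c M = n.+1%:R * logder c Q.
Proof.
rewrite /logder /M derivD derivZ derivM derivXsubC mul1r.
rewrite !(hornerXsubC, hornerD, hornerZ, hornerM) subrr !mul0r !addr0 -natr1.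
by field; rewrite n_neq0 (horner_prod_XsubC_exp_neq0 m).
Qed.

Lemma logder_r : n%:R * logder c r =
  n%:R * \sum_(j < k) (c - z j)^-1 + \sum_(j < k) (m j)%:R / (c - z j).
Proof.
have logder_MA :=
  logderM horner_r_neq0 (horner_prod_XsubC_exp_neq0 (fun j => (m j).-1)).
rewrite -M_factor logder_prod_XsubC_exp in logder_MA.
have := logder_M; rewrite logder_MA logder_prod_XsubC_exp.
have -> : \sum_(j < k) (m j)%:R / (c - z j) =
          \sum_(j < k) (m j).-1%:R / (c - z j) + \sum_(j < k) (c - z j)^-1.
  rewrite -big_split; apply: eq_bigr => j _.
  by rewrite -{1}(prednK (m_gt0 j)) -natr1 mulrDl div1r.
move=> eq_n; apply: (addIr (n%:R * \sum_(j < k) (m j).-1%:R / (c - z j))).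
by rewrite -mulrDr eq_n -natr1; ring.
Qed.

Theorem critical_points_sum : exists rs : seq F,
  [/\ (size rs <= k)%N, all (root (('X - c%:P) ^+ n * Q)^`()) rs &
      n%:R * \sum_(e <- rs) (c - e)^-1 =
      n%:R * \sum_(j < k) (c - z j)^-1 + \sum_(j < k) (m j)%:R / (c - z j)].
Proof.
have [rs [size_rs root_rs logder_rs]] := logder_sum_roots horner_r_neq0.
exists rs; split.
- rewrite size_rs -ltnS prednK ?size_r //.
  by rewrite size_poly_gt0 (poly_neq0_horner horner_r_neq0).
- apply/allP => e /(allP root_rs) re.
  by rewrite deriv_pcorE M_factor !rootM re orbT.
- by rewrite -logder_rs logder_r.
Qed.

End CriticalPoints.

Lemma exists_ge1_of_sum (R : realDomainType) (T : eqType) (s : seq T)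
    (f : T -> R) (k : nat) :
  (0 < k)%N -> (size s <= k)%N -> k%:R <= \sum_(x <- s) f x ->
  exists2 x, x \in s & 1 <= f x.
Proof.
move=> k_gt0 size_s.
have [/hasP [x xs fx] _ | /hasPn f_lt1] := boolP (has (fun x => 1 <= f x) s).
  by exists x.
rewrite leNgt => /negP[].
case: s size_s f_lt1 => [|x s] size_s f_lt1; first by rewrite big_nil ltr0n.
apply: lt_le_trans (_ : (size (x :: s))%:R <= k%:R); last by rewrite ler_nat.
rewrite -sum1_size natr_sum !big_seq.
apply: ltr_sum => [|y ys]; last by rewrite ltNge f_lt1.
by apply/hasP; exists x; rewrite ?mem_head.
Qed.

Lemma half_weighted_sum_ge (R : realFieldType) (k n : nat) (m : 'I_k -> nat)
    (W : 'I_k -> R) :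
  (forall j, 2^-1 <= W j) -> (k * n <= \sum_(j < k) m j)%N ->
  k%:R * n%:R <= n%:R * \sum_(j < k) W j + \sum_(j < k) (m j)%:R * W j.
Proof.
move=> W_ge sum_m.
have sum_W : k%:R * 2^-1 <= \sum_(j < k) W j.
  by rewrite mulr_natl -[in X in _ *+ X](card_ord k) -sumr_const ler_sum.
have sum_mW : (\sum_(j < k) m j)%:R * 2^-1 <= \sum_(j < k) (m j)%:R * W j.
  by rewrite natr_sum mulr_suml ler_sum // => j _; rewrite ler_wpM2l.
have : (k * n)%:R <= (\sum_(j < k) m j)%:R :> R by rewrite ler_nat.
have : 0 <= n%:R :> R by [].
rewrite natrM; nra.
Qed.

Local Open Scope complex_scope.

Section UnitDisk.
Variable R : rcfType.

Lemma Re_natrM (m : nat) (x : R[i]) :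
  complex.Re (m%:R * x) = m%:R * complex.Re x.
Proof. by rewrite mulr_natl raddfMn mulr_natl. Qed.

Lemma normc_le (x : R[i]) (r : R) : 0 <= r ->
  (`|x| <= r%:C) = (complex.Re x ^+ 2 + complex.Im x ^+ 2 <= r ^+ 2).
Proof.
move=> r_ge0; rewrite normc_def lecR -{1}(ger0_norm r_ge0) -sqrtr_sqr.
by rewrite ler_sqrt // sqr_ge0.
Qed.

Lemma Re_inv_1subc (a b : R) :
  complex.Re ((1 - (a +i* b))^-1) = (1 - a) / ((1 - a) ^+ 2 + b ^+ 2).
Proof.
have -> : 1 - (a +i* b) = (1 - a) +i* (- b).
  by apply/eqP; rewrite eq_complex /= add0r !eqxx.
by rewrite /=; congr (_ / (_ + _)); exact: sqrrN.
Qed.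

Lemma sqr_dist1_gt0 (a b : R) : a +i* b != 1 -> 0 < (1 - a) ^+ 2 + b ^+ 2.
Proof.
move=> ab_neq1; rewrite lt_def addr_ge0 ?sqr_ge0 // andbT paddr_eq0 ?sqr_ge0 //.
rewrite !sqrf_eq0 subr_eq0; apply: contra ab_neq1 => /andP[/eqP a1 /eqP b0].
by rewrite -a1 b0.
Qed.

Lemma Re_inv_1subc_ge_half (w : R[i]) : `|w| <= 1 -> w != 1 ->
  2^-1 <= complex.Re ((1 - w)^-1).
Proof.
case: w => a b.
rewrite Re_inv_1subc -[X in `|_| <= X](rmorph1 (real_complex R)).
rewrite normc_le //= expr1n => ab_le1 /sqr_dist1_gt0 D_gt0.
rewrite ler_pdivlMr //; nra.
Qed.

Lemma Re_inv_1subc_ge1 (e : R[i]) : 1 <= complex.Re ((1 - e)^-1) ->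
  e != 1 /\ `|e - 2^-1| <= 2^-1.
Proof.
move=> Re_ge1; have e_neq1 : e != 1.
  by apply: contraTneq Re_ge1 => ->; rewrite subrr invr0 /= ler10.
split=> //; move: e e_neq1 Re_ge1 => [a b] /sqr_dist1_gt0 D_gt0.
rewrite Re_inv_1subc ler_pdivlMr // mul1r => D_le.
have -> : 2^-1 = (2^-1 : R)%:C by rewrite fmorphV rmorph_nat.
rewrite normc_le ?invr_ge0 ?ler0n //=; nra.
Qed.

End UnitDisk.

Theorem corollary1 (R : realType) (k n : nat) (z : 'I_k -> R[i]) (nn : 'I_k -> nat)
  (hk : (1 <= k)%N) (hinj : injective z)
  (hz1 : forall j, `|z j| <= 1) (hzne : forall j, z j != 1)
  (hn : (2 <= n)%N) (hnn : forall j, (1 <= nn j)%N)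
  (hsum : (k * n <= \sum_(j < k) nn j)%N) :
  exists zeta : R[i], zeta != 1 /\ root (@pcor R k n z nn)^`() zeta
                      /\ `|zeta - 2^-1| <= 2^-1.
Proof.
have n_gt0 : (0 < n)%N by apply: ltnW.
have n_neq0 : n%:R != 0 :> R[i] by rewrite pnatr_eq0 -lt0n.
have [rs [size_rs root_rs sum_rs]] := critical_points_sum n_neq0 hnn hzne.
pose W (e : R[i]) := complex.Re ((1 - e)^-1).
have sum_W : k%:R <= \sum_(e <- rs) W e.
  rewrite -(@ler_pM2l _ n%:R) ?ltr0n // mulrC.
  have := congr1 (@complex.Re R) sum_rs.
  rewrite raddfD /= !Re_natrM !raddf_sum /= => ->.
  under [X in _ <= _ + X]eq_bigr do rewrite Re_natrM.
  apply: half_weighted_sum_ge hsum => j.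
  exact: Re_inv_1subc_ge_half (hz1 j) (hzne j).
have [e e_rs /Re_inv_1subc_ge1 [e_neq1 e_disk]] :=
  exists_ge1_of_sum hk size_rs sum_W.
exists e; split=> //; split=> //.
by rewrite /pcor -polyC1 (allP root_rs _ e_rs).
Qed.
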